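(* Suppose the validators who violate at least one of the slashing conditions I or II have total deposit strictly less than $\frac{1}{3}$ of the total deposit. Then no two conflicting checkpoints can both be finalized. Equivalently: if two conflicting checkpoints are both finalized, then validators holding at least $\frac13$ of the total deposit have violated slashing condition I or II.
   Context: Checkpoints form a rooted tree (the checkpoint tree) with root $r$. For a checkpoint $c$, its height $h(c)$ is the number of edges on the path from $c$ to $r$, so $h(r)=0$ and a child has height one more than its parent. Two checkpoints are conflicting if neither is an ancestor (or equal to, or a descendant) of the other. There is a fixed finite set of validators, each with a positive deposit; fractions of validators are always deposit-weighted. A vote is a signed message $\langle \nu, s, t, h(s), h(t)\rangle$ from validator $\nu$, where $s$ (source) and $t$ (target) are checkpoints and $s$ is a strict ancestor of $t$. A supermajority link $s\to t$ is an ordered pair of checkpoints such that validators holding at least $\frac23$ of the total deposit have published the vote with source $s$ and target $t$. A checkpoint $c$ is justified if $c=r$ or there is a supermajority link $c'\to c$ with $c'$ justified. A checkpoint $c$ is finalized if $c=r$, or $c$ is justified and there is a supermajority link $c\to c'$ where $c'$ is a direct child of $c$ in the checkpoint tree (so $h(c')=h(c)+1$). Slashing conditions: a validator $\nu$ violates a slashing condition if it publishes two distinct votes $\langle \nu,s_1,t_1,h(s_1),h(t_1)\rangle$ and $\langle \nu,s_2,t_2,h(s_2),h(t_2)\rangle$ such that either (I) $h(t_1)=h(t_2)$, or (II) $h(s_1)<h(s_2)<h(t_2)<h(t_1)$. *)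

From mathcomp Require Import all_boot.
Set Implicit Arguments. Unset Strict Implicit. Unset Printing Implicit Defensive.

Section Casper.
Variable C : Type.
Variable r : C.
Variable par : C -> C.      (* parent map; par r = r by convention *)
Variable h : C -> nat.

(* These
   imply iter (h c) par c = r, i.e. every checkpoint reaches the root. *)
Definition is_checkpoint_tree : Prop :=
  [/\ par r = r, h r = 0 & forall c, c <> r -> h c = (h (par c)).+1].

Definition anc (a c : C) : Prop := exists k, iter k par c = a.
Definition strict_anc (a c : C) : Prop := anc a c /\ a <> c.
Definition conflicting (a b : C) : Prop := ~ anc a b /\ ~ anc b a.

Variable V : finType.
Variable dep : V -> nat.
Variable pub : V -> C -> C -> bool. (* pub v s t : v published vote <v,s,t,h s,h t> *)

Definition weight (A : {set V}) : nat := \sum_(v in A) dep v.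
Definition total_deposit : nat := \sum_(v : V) dep v.

Definition sm_link (s t : C) : Prop :=
  2 * total_deposit <= 3 * \sum_(v | pub v s t) dep v.

Inductive justified : C -> Prop :=
| justified_root : justified r
| justified_link c' c : justified c' -> sm_link c' c -> justified c.

(* c' is a direct child of c iff par c' = c and c' <> r *)
Definition finalized (c : C) : Prop :=
  c = r \/ (justified c /\ exists c', [/\ par c' = c, c' <> r & sm_link c c']).

Definition slashable (v : V) : Prop :=
  exists s1 t1 s2 t2,
    [/\ pub v s1 t1, pub v s2 t2, (s1, t1) <> (s2, t2) &
        h t1 = h t2 \/ [/\ h s1 < h s2, h s2 < h t2 & h t2 < h t1]].
End Casper.

(** Let [c] be finalized through the link [c -> c'] to its child and let [t]
    be any justified checkpoint at least as high as [c].  Following the chain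
    of links that justifies [t] downwards, either the chain passes through [c]
    (so [c] is an ancestor of [t]), or some link [s -> u] of the chain relates
    to [c -> c'] or to the link justifying [c] in one of the forbidden ways:
    same target height (condition I), or [h s < h c < h c' < h u]
    (condition II).  Two supermajority links are voted for jointly by at least
    a third of the deposit, and every such validator is slashable.  Applied to
    the lower of two conflicting finalized checkpoints this gives the theorem. *)

From Stdlib Require Import Classical.
From mathcomp Require Import all_boot zify.

Set Implicit Arguments.
Unset Strict Implicit.
Unset Printing Implicit Defensive.

Lemma anc_trans (C : Type) (par : C -> C) a b c :
  anc par a b -> anc par b c -> anc par a c.
Proof. by move=> [k <-] [l <-]; exists (k + l); rewrite iterD. Qed.

Lemma two_thirds_overlap (V : finType) (dep : V -> nat) (P Q : pred V) :
  2 * \sum_(v : V) dep v <= 3 * \sum_(v | P v) dep v ->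
  2 * \sum_(v : V) dep v <= 3 * \sum_(v | Q v) dep v ->
  \sum_(v : V) dep v <= 3 * weight dep [set v | P v && Q v].
Proof.
move=> HP HQ.
suff : \sum_(v | P v) dep v + \sum_(v | Q v) dep v <=
       \sum_(v : V) dep v + weight dep [set v | P v && Q v] by lia.
rewrite /weight (big_mkcond P) (big_mkcond Q)
  (big_mkcond (fun v => v \in _)) -!big_split /=.
by apply: leq_sum => v _; rewrite inE; case: (P v); case: (Q v) => /=; lia.
Qed.

Section CheckpointTree.

Variables (C : Type) (r : C) (par : C -> C) (h : C -> nat).
Hypothesis tree : is_checkpoint_tree r par h.

Lemma height_par_le c : h (par c) <= h c.
Proof.
case: tree => par_r _ height_par.
case: (classic (c = r)) => [->|c_r]; first by rewrite par_r.
by rewrite (height_par _ c_r).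
Qed.

Lemma height_iter_par_le k c : h (iter k par c) <= h c.
Proof. by elim: k c => [|k IHk] c //=; exact: leq_trans (height_par_le _) (IHk c). Qed.

Lemma iter_par_root k : iter k par r = r.
Proof. by case: tree => par_r _ _; elim: k => //= k ->. Qed.

Lemma strict_anc_height_lt s t : strict_anc par s t -> h s < h t.
Proof.
case=> [[[|k] st] s_t]; first by case: s_t.
have t_r : t <> r by move=> t_r; apply: s_t; rewrite -st t_r iter_par_root.
case: tree => _ _ height_par.
by rewrite (height_par _ t_r) ltnS -st iterSr height_iter_par_le.
Qed.

Lemma anc_root c : anc par r c.
Proof.
exists (h c); case: tree => _ h_r height_par.
suff iter_height : forall n c, h c = n -> iter n par c = r by exact: iter_height.
elim=> [|n IHn] {}c hc.
  by case: (classic (c = r)) => // c_r; rewrite height_par in hc.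
have c_r : c <> r by move=> c_r; rewrite c_r h_r in hc.
by rewrite iterSr; apply: IHn; move: hc; rewrite height_par // => -[].
Qed.

Variables (V : finType) (dep : V -> nat) (pub : V -> C -> C -> bool).

Definition third_slashable : Prop :=
  exists S : {set V},
    (forall v, v \in S -> slashable h pub v) /\
    total_deposit dep <= 3 * weight dep S.

Lemma conflicting_links_slashable s1 t1 s2 t2 :
  sm_link dep pub s1 t1 -> sm_link dep pub s2 t2 -> (s1, t1) <> (s2, t2) ->
  h t1 = h t2 \/ [/\ h s1 < h s2, h s2 < h t2 & h t2 < h t1] ->
  third_slashable.
Proof.
move=> link1 link2 links_ne forbidden.
exists [set v | pub v s1 t1 && pub v s2 t2]; split.
  by move=> v; rewrite inE => /andP[vote1 vote2]; exists s1, t1, s2, t2.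
exact: two_thirds_overlap.
Qed.

Hypothesis vote_strict_anc : forall v s t, pub v s t -> strict_anc par s t.
Hypothesis total_pos : 0 < total_deposit dep.

Lemma sm_link_strict_anc s t : sm_link dep pub s t -> strict_anc par s t.
Proof.
case: (pickP (fun v => pub v s t)) => [v /vote_strict_anc //|no_voter].
by rewrite /sm_link big_pred0 //; move: total_pos; rewrite /total_deposit; lia.
Qed.

Lemma justified_above_finalized c s0 c' :
  sm_link dep pub s0 c -> par c' = c -> c' <> r -> sm_link dep pub c c' ->
  forall t, justified r dep pub t -> h c <= h t ->
  anc par c t \/ third_slashable.
Proof.
move=> link0 par_c' c'_r link1.
have hc_pos : 0 < h c.
  exact: leq_ltn_trans (leq0n _) (strict_anc_height_lt (sm_link_strict_anc link0)).
have hc' : h c' = (h c).+1 by case: tree => _ _ height_par; rewrite height_par // par_c'.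
move=> t; elim=> [|s {}t _ IHs link].
  by case: tree => _ -> _; rewrite leqNgt hc_pos.
have s_anc_t := sm_link_strict_anc link.
have hs_lt := strict_anc_height_lt s_anc_t.
move=> hc_le; case: (ltngtP (h c) (h t)) hc_le => // [hc_lt|hc_eq] _; last first.
  case: (classic (t = c)) => [->|t_c]; first by left; exists 0.
  right; apply: (conflicting_links_slashable link link0); last by left.
  by case.
case: (ltngtP (h c') (h t)) => [hc'_lt|hc'_gt|hc'_eq]; first last.
- case: (classic ((s, t) = (c, c'))) => [[_ ->]|links_ne].
    by left; exists 1; rewrite /= par_c'.
  by right; apply: (conflicting_links_slashable link link1 links_ne); left.
- by lia.
case: (leqP (h c) (h s)) => [hs_ge|hs_lt_c].
  case: (IHs hs_ge) => [c_anc_s|]; last by right.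
  by left; apply: anc_trans c_anc_s (proj1 s_anc_t).
right; apply: (conflicting_links_slashable link link1); last by right; split; lia.
by case=> _ t_c'; rewrite t_c' ltnn in hc'_lt.
Qed.

Lemma finalized_conflicting_slashable c1 c2 :
  conflicting par c1 c2 -> h c1 <= h c2 ->
  finalized r par dep pub c1 -> justified r dep pub c2 -> third_slashable.
Proof.
move=> [not_anc12 _] h12 [c1_r|[just1 [c' [par_c' c'_r link1]]]].
  by case: not_anc12; rewrite c1_r; exact: anc_root.
have c1_r : c1 <> r by move=> c1_r; apply: not_anc12; rewrite c1_r; exact: anc_root.
have [s0 link0] : exists s0, sm_link dep pub s0 c1.
  by case: just1 c1_r => // s0 c _ link _; exists s0.
by move=> just2; case: (justified_above_finalized link0 par_c' c'_r link1 just2 h12).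
Qed.

End CheckpointTree.

Theorem theorem1 (C : Type) (r : C) (par : C -> C) (h : C -> nat)
  (Htree : is_checkpoint_tree r par h)
  (V : finType) (dep : V -> nat) (Hdep : forall v, 0 < dep v)
  (pub : V -> C -> C -> bool)
  (Hvote : forall v s t, pub v s t -> strict_anc par s t)
  (c1 c2 : C) :
  conflicting par c1 c2 ->
  finalized r par dep pub c1 -> finalized r par dep pub c2 ->
  exists S : {set V},
    (forall v, v \in S -> slashable h pub v) /\
    total_deposit dep <= 3 * weight dep S.
Proof.
move=> conflict fin1 fin2.
(* With zero total deposit every pair of checkpoints is a supermajority link,
   so links need not point upwards; the empty set of validators then suffices. *)
case: (posnP (total_deposit dep)) => [total0|total_pos].
  by exists set0; split=> [v|]; rewrite ?inE // total0.
have justified_of_finalized c : finalized r par dep pub c -> justified r dep pub c.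
  by case=> [->|[]] //; constructor.
case: (leqP (h c1) (h c2)) => [h12|h21].
  exact: finalized_conflicting_slashable fin1 (justified_of_finalized _ fin2).
apply: (finalized_conflicting_slashable Htree Hvote total_pos _ (ltnW h21) fin2).
  by case: conflict.
exact: justified_of_finalized.
Qed.
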